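(* Fix $\theta\ge1$. Let $A$ be a finitely generated free abelian group, let $S$ be a symmetric finite generating set for $A$, and let $T$ be a finite subset of $A$ such that the subgroup $\langle T\rangle$ has finite index in $A$. For $N\in\mathbb{N}$ let $T_N=\{t^{\pm N}\mid t\in T\}$. Then for all sufficiently large $N$, only finitely many words in the letters $S$ are $\theta$-efficient for the word metric on $A$ associated to the generating set $S\cup T_N$.
   Context: Given a group with a symmetric finite generating set $Y$ and associated word metric $d$, a word $w=a_1\cdots a_l$ in letters from a subset of $Y$ is $\theta$-efficient if $l\le\theta\, d(1,w)$, where $d(1,w)$ is the word length (with respect to $Y$) of the element represented by $w$. *)

From HB Require Import structures.
From mathcomp Require Import all_boot all_order all_algebra.
From mathcomp Require Import boolp reals.
Set Implicit Arguments. Unset Strict Implicit. Unset Printing Implicit Defensive.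
Import Order.TTheory GRing.Theory Num.Theory.
Local Open Scope ring_scope.

(* The finitely generated free abelian group of rank n, written additively:
   Z^n = 'rV[int]_n.  Group multiplication is +, t^k is t *~ k. *)
Definition fgfree (n : nat) := 'rV[int]_n.

Section Words.
Variable A : zmodType.

Definition word_over (Y : seq A) (w : seq A) : bool := all (fun a => a \in Y) w.

Definition word_eval (w : seq A) : A := \sum_(a <- w) a.

Definition symmetric_set (Y : seq A) : Prop := forall y, y \in Y -> - y \in Y.

(* Y generates A (as a group; Y is used symmetrically by the caller) *)
Definition generates (Y : seq A) : Prop :=
  forall g : A, exists w, word_over Y w /\ word_eval w = g.

Definition in_gen_subgroup (T : seq A) (g : A) : Prop :=
  exists w, word_over (T ++ map (fun t => - t) T) w /\ word_eval w = g.

(* <T> has finite index: finitely many cosets, i.e. a finite list of coset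
   representatives covering A *)
Definition finite_index_gen (T : seq A) : Prop :=
  exists R : seq A, forall g : A,
    exists2 r, r \in R & in_gen_subgroup T (g - r).

Definition reach_in (Y : seq A) (g : A) (k : nat) : Prop :=
  exists w, word_over Y w /\ size w = k /\ word_eval w = g.

(* word length d(1,g) w.r.t. Y: least length of a word over Y representing g
   (0 if none exists; never happens when Y generates) *)
Definition word_length (Y : seq A) (g : A) : nat :=
  match pselect (exists k, reach_in Y g k) with
  | left P => @ex_minn (fun k => `[< reach_in Y g k >])
                (let: ex_intro k Hk := P in ex_intro _ k (asboolT Hk))
  | right _ => 0%N
  end.

Definition efficient (R : realType) (theta : R) (Y : seq A) (w : seq A) : Prop :=
  (size w)%:R <= theta * (word_length Y (word_eval w))%:R.

Definition powers_pm (T : seq A) (N : nat) : seq A :=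
  map (fun t => t *+ N) T ++ map (fun t => - (t *+ N)) T.

End Words.

(* Every generator s has a multiple s^k, with 0 < k bounded by the index of
   <T>, lying in <T>; so s^(kN) is a word of length at most a in T_N, with a
   independent of N.  A word w over S of length l therefore represents an
   element of length at most C + a (l / N) for S ∪ T_N, where C depends on S,
   T and N but not on w.  If w is θ-efficient and N >= 2 θ a, this forces
   l <= θ C + l / 2, i.e. l <= 2 θ C, and there are finitely many such words. *)

From HB Require Import structures.
From mathcomp Require Import all_boot all_order all_algebra.
From mathcomp Require Import boolp reals.
From mathcomp Require Import zify lra.
Import Order.TTheory GRing.Theory Num.Theory.
Local Open Scope ring_scope.

Set Implicit Arguments. Unset Strict Implicit.

Section WordMetric.
Variable A : zmodType.
Implicit Types (X Y Z T : seq A) (g h x : A) (u v w : seq A).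

Lemma word_over_cat Y u v : word_over Y (u ++ v) = word_over Y u && word_over Y v.
Proof. exact: all_cat. Qed.

Lemma word_eval_cat u v : word_eval (u ++ v) = word_eval u + word_eval v.
Proof. exact: big_cat. Qed.

Lemma word_eval_count x v :
  word_eval v = x *+ count (pred1 x) v + word_eval (filter (predC1 x) v).
Proof.
rewrite /word_eval (bigID (pred1 x)) /= big_filter; congr (_ + _).
by rewrite (eq_bigr (fun=> x)) => [|? /eqP //]; rewrite big_const_seq iter_addr_0.
Qed.

Definition reach_within Y g k :=
  exists w, [/\ word_over Y w, (size w <= k)%N & word_eval w = g].

Lemma reach_within0 Y : reach_within Y 0 0.
Proof. by exists [::]; rewrite /word_eval big_nil. Qed.

Lemma reach_within_letter Y x : x \in Y -> reach_within Y x 1.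
Proof. by exists [:: x]; rewrite /word_over /= /word_eval big_seq1 andbT. Qed.

Lemma reach_within_mono Y g k1 k2 :
  (k1 <= k2)%N -> reach_within Y g k1 -> reach_within Y g k2.
Proof. by move=> le12 [w [Yw le1 <-]]; exists w; split => //; apply: leq_trans le12. Qed.

Lemma reach_withinD Y g h k1 k2 :
  reach_within Y g k1 -> reach_within Y h k2 -> reach_within Y (g + h) (k1 + k2).
Proof.
move=> [u [Yu le1 <-]] [v [Yv le2 <-]]; exists (u ++ v).
by rewrite word_over_cat Yu Yv size_cat leq_add // word_eval_cat.
Qed.

Lemma reach_withinMn Y g k c : reach_within Y g k -> reach_within Y (g *+ c) (k * c).
Proof.
move=> Rg; elim: c => [|c IH]; first by rewrite muln0; exact: reach_within0.
by rewrite mulrS mulnS; apply: reach_withinD.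
Qed.

Lemma word_length_le Y g k : reach_within Y g k -> (word_length Y g <= k)%N.
Proof.
move=> [w [Yw le_wk Ew]]; rewrite /word_length; case: pselect => [P|]; last first.
  by case; exists (size w), w.
case: ex_minnP => m _ /(_ (size w)) min_m.
by apply/(leq_trans _ le_wk)/min_m/asboolP; exists w.
Qed.

Lemma reach_withinMn_divn Y x m a c : x \in Y -> (0 < m)%N ->
  reach_within Y (x *+ m) a -> reach_within Y (x *+ c) (a * (c %/ m) + c %% m).
Proof.
move=> Yx m_gt0 Rxm; rewrite {1}(divn_eq c m) mulrnDr mulnC mulrnA.
rewrite -[X in (_ + X)%N]mul1n.
apply: reach_withinD; apply: reach_withinMn => //; exact: reach_within_letter.
Qed.

Lemma reach_within_word_eval Y X N M a v : {subset X <= Y} -> (0 < N)%N ->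
  (forall x, x \in X -> exists m, (N <= m <= M)%N /\ reach_within Y (x *+ m) a) ->
  word_over X v -> reach_within Y (word_eval v) (size X * M + a * (size v %/ N)).
Proof.
move=> + N_gt0; elim: X v => [|x X IH] v sXY HX Xv.
  case: v Xv => // _; rewrite /word_eval big_nil.
  exact: reach_within_mono (reach_within0 Y).
have [m [/andP[Nm mM] Rxm]] := HX x (mem_head _ _).
have m_gt0 : (0 < m)%N by apply: leq_trans Nm.
rewrite (word_eval_count x v); set c := count _ v; set v' := filter _ v.
have Xv' : word_over X v'.
  apply/allP => y; rewrite mem_filter => /andP[yx yv].
  by move: (allP Xv y yv); rewrite inE (negbTE yx).
have sXxX : {subset X <= x :: X} by move=> y Xy; rewrite inE Xy orbT.
have Rv' := IH v' (fun y Xy => sXY y (sXxX y Xy)) (fun y Xy => HX y (sXxX y Xy)) Xv'.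
have Rxc := reach_withinMn_divn c (sXY x (mem_head _ _)) m_gt0 Rxm.
apply: reach_within_mono (reach_withinD Rxc Rv').
have div_m : (c %/ m <= c %/ N)%N by apply: leq_div2l.
have mod_m : (c %% m <= M)%N by apply: leq_trans (ltnW (ltn_pmod _ m_gt0)) mM.
have size_v : size v = (c + size v')%N by rewrite size_filter count_predC.
have div_v : (c %/ N + size v' %/ N <= size v %/ N)%N by rewrite size_v divnD // leq_addr.
rewrite /= mulSn -(leq_add2r (a * (c %/ N) + a * (size v' %/ N))).
have := leq_mul2l a (c %/ m) (c %/ N); rewrite div_m orbT => a_div_m.
have := leq_mul2l a (c %/ N + size v' %/ N) (size v %/ N); rewrite div_v orbT mulnDr.
lia.
Qed.

Lemma in_gen_subgroupD T g h :
  in_gen_subgroup T g -> in_gen_subgroup T h -> in_gen_subgroup T (g + h).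
Proof.
move=> [u [Tu <-]] [v [Tv <-]]; exists (u ++ v).
by rewrite word_over_cat Tu Tv word_eval_cat.
Qed.

Lemma in_gen_subgroupN T g : in_gen_subgroup T g -> in_gen_subgroup T (- g).
Proof.
move=> [u [Tu <-]]; exists (map -%R u); split; last by rewrite /word_eval big_map sumrN.
apply/allP => _ /mapP[y uy ->]; move: (allP Tu y uy).
rewrite !mem_cat => /orP[Ty|/mapP[t Tt ->]]; last by rewrite opprK Tt.
by rewrite (map_f -%R Ty) orbT.
Qed.

(* Pigeonhole: two of 0, x, 2x, ..., (#Rs)x have the same coset representative. *)
Lemma finite_index_mulrn T (Rs : seq A) x :
  (forall g, exists2 r, r \in Rs & in_gen_subgroup T (g - r)) ->
  exists2 k, (0 < k <= size Rs)%N & in_gen_subgroup T (x *+ k).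
Proof.
move=> HR; have /choice[rep Hrep] : forall i : nat,
    exists r, r \in Rs /\ in_gen_subgroup T (x *+ i - r).
  by move=> i; have [r ? ?] := HR (x *+ i); exists r.
have : ~~ uniq [seq rep i | i <- iota 0 (size Rs).+1].
  apply/negP => /(@uniq_leq_size _ _ Rs) le_size.
  have /le_size : {subset [seq rep i | i <- iota 0 (size Rs).+1] <= Rs}.
    by move=> _ /mapP[i _ ->]; case: (Hrep i).
  by rewrite size_map size_iota ltnn.
case/(uniqPn 0) => i [j [lt_ij]]; rewrite size_map size_iota => lt_j.
have lt_i : (i < (size Rs).+1)%N by apply: ltn_trans lt_j.
rewrite !(nth_map 0%N) ?size_iota // !nth_iota // !add0n => eq_rep.
exists (j - i)%N; first by rewrite subn_gt0 lt_ij leq_subLR; lia.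
have := in_gen_subgroupD (Hrep j).2 (in_gen_subgroupN (Hrep i).2).
by rewrite eq_rep opprB addrA subrK -mulrnBr // ltnW.
Qed.

Lemma reach_within_powers_pm Z T N v : word_over (T ++ map -%R T) v ->
  reach_within (Z ++ powers_pm T N) (word_eval v *+ N) (size v).
Proof.
move=> Tv; exists (map (fun y => y *+ N) v); split.
- apply/allP => _ /mapP[y vy ->]; move: (allP Tv y vy).
  rewrite !mem_cat => /orP[Ty|/mapP[t Tt ->]].
    by rewrite (map_f (fun t => t *+ N) Ty) orbT.
  by rewrite mulNrn (map_f (fun t => - (t *+ N)) Tt) !orbT.
- by rewrite size_map.
- by rewrite /word_eval big_map -sumrMnl.
Qed.

Lemma finite_index_uniform_multiples T (Rs : seq A) X :
  (forall g, exists2 r, r \in Rs & in_gen_subgroup T (g - r)) ->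
  exists a, forall x, x \in X -> exists2 k, (0 < k <= size Rs)%N &
    forall Z N, reach_within (Z ++ powers_pm T N) (x *+ (k * N)) a.
Proof.
move=> HR; have /choice[kv Hkv] : forall x, exists kv : nat * seq A,
    [/\ (0 < kv.1 <= size Rs)%N, word_over (T ++ map -%R T) kv.2 & word_eval kv.2 = x *+ kv.1].
  by move=> x; have [k ? [v [? ?]]] := finite_index_mulrn x HR; exists (k, v).
exists (\max_(x <- X) size (kv x).2) => x Xx; have [? Tv Ev] := Hkv x.
exists (kv x).1 => // Z N; rewrite mulrnA -Ev.
exact: reach_within_mono (leq_bigmax_seq _ Xx isT) (reach_within_powers_pm Z N Tv).
Qed.

Fixpoint words_of_size Y m : seq (seq A) :=
  if m is m'.+1 then [seq y :: u | y <- Y, u <- words_of_size Y m'] else [:: [::]].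

Definition words_upto Y L := flatten [seq words_of_size Y m | m <- iota 0 L.+1].

Lemma mem_words_of_size Y w : word_over Y w -> w \in words_of_size Y (size w).
Proof.
elim: w => [|y w IH] //= /andP[Yy Yw].
exact: (allpairs_f (fun y u => y :: u)) Yy (IH Yw).
Qed.

Lemma mem_words_upto Y L w :
  word_over Y w -> (size w <= L)%N -> w \in words_upto Y L.
Proof.
move=> Yw le_wL; apply/flatten_mapP; exists (size w); last exact: mem_words_of_size.
by rewrite mem_iota.
Qed.

End WordMetric.

Lemma efficient_size_bound (R : realFieldType) (theta l d C a q N : R) :
  0 <= theta -> 0 <= q -> 2 * theta * a <= N ->
  l <= theta * d -> d <= C + a * q -> q * N <= l -> l <= 2 * theta * C.
Proof.
move=> theta_ge0 q_ge0 N_large l_eff d_le qN_le.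
have thaq : 2 * theta * a * q <= q * N by rewrite mulrC ler_wpM2l.
have : theta * d <= theta * (C + a * q) by rewrite ler_wpM2l.
lra.
Qed.

Theorem lemma5p1 (R : realType) (theta : R) (n : nat) (S T : seq (fgfree n)) :
  1 <= theta ->
  symmetric_set S -> generates S ->
  finite_index_gen T ->
  exists N0 : nat, forall N : nat, (N0 <= N)%N ->
    exists ws : seq (seq (fgfree n)), forall w : seq (fgfree n),
      word_over S w -> efficient theta (S ++ powers_pm T N) w -> w \in ws.
Proof.
move=> theta_ge1 _ _ [Rs HR].
have theta_ge0 : 0 <= theta by apply: le_trans theta_ge1.
have [a Ha] := finite_index_uniform_multiples S HR.
exists (Num.bound (2 * theta * a%:R)).+1 => N le_N0N.
have N_gt0 : (0 < N)%N by apply: leq_trans le_N0N.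
have N_large : 2 * theta * a%:R <= N%:R.
  apply/ltW/(lt_le_trans (archi_boundP _)); first by rewrite !mulr_ge0.
  by rewrite ler_nat ltnW.
set C := (size S * (size Rs * N))%N.
exists (words_upto S (Num.bound (2 * theta * C%:R))) => w Sw w_eff.
apply/(mem_words_upto Sw)/ltnW; rewrite -(ltr_nat R).
apply: le_lt_trans (archi_boundP _); last by rewrite !mulr_ge0.
have d_le : (word_length (S ++ powers_pm T N) (word_eval w) <=
    C + a * (size w %/ N))%N.
  apply/word_length_le/reach_within_word_eval => // [x|x Sx].
    by rewrite mem_cat => ->.
  have [k /andP[k_gt0 k_le] Rx] := Ha x Sx; exists (k * N)%N; split => //.
  by rewrite leq_pmull //= leq_mul2r k_le orbT.
apply: (efficient_size_bound (q := (size w %/ N)%:R) theta_ge0 _ N_large w_eff) => //.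
- by rewrite -natrM -natrD ler_nat.
- by rewrite -natrM ler_nat leq_divM.
Qed.
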